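(* Let $B$ be an augmented bisimplicial groupoid with a left augmented abacus map $f$, and let $\tilde B$ be obtained from $B$ by replacing, for $i,j\ge0$, each top vertical face map $e_{i+1}:B_{i+1,j}\to B_{i,j}$ by $\tilde e_{i+1}:=d_0\circ f_{i,j}$ (keeping all other structure maps, the augmentation column $B_{\bullet,-1}$ and the augmentation maps). Then the augmentation map $u:\tilde B_{\bullet,0}\to B_{\bullet,-1}$ is a simplicial map.
   Context: An augmented bisimplicial groupoid is a functor $(\Delta_+^{\mathrm{op}}\times\Delta_+^{\mathrm{op}})\setminus\{(-1,-1)\}\to\mathbf{Grpd}$, $\Delta_+$ the augmented simplex category; it consists of a bisimplicial groupoid $(B_{i,j})_{i,j\ge0}$ together with a simplicial groupoid $B_{\bullet,-1}$ (vertical maps $e_k,t_k$), a simplicial groupoid $B_{-1,\bullet}$ (horizontal maps $d_k,s_k$) and augmentation maps $u:B_{i,0}\to B_{i,-1}$ and $v:B_{0,j}\to B_{-1,j}$ (with $u d_0=u d_1$ on $B_{i,1}$, and compatibly with the other structure). Horizontal maps: $d_k:B_{i,j}\to B_{i,j-1}$, $s_k$; vertical maps: $e_k:B_{i,j}\to B_{i-1,j}$, $t_k$; on $B_{i,j}$, $e_\top=e_i$, $t_\top=t_i$, $d_\bot=d_0$. An abacus map is a family $f_{i,j}:B_{i+1,j}\to B_{i,j+1}$ ($i,j\ge0$) such that each $f_{i,\bullet}:B_{i+1,\bullet}\to\mathrm{Dec}_\bot(B_{i,\bullet})$ is simplicial (where $\mathrm{Dec}_\bot$ shifts down by one and deletes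 $d_0,s_0$), each $f_{\bullet,j}:\mathrm{Dec}_\top(B_{\bullet,j})\to B_{\bullet,j+1}$ commutes with all structure maps except top face maps (where $\mathrm{Dec}_\top$ shifts down by one and deletes last face and degeneracy maps), and $d_\bot f_{i,j}t_\top=\mathrm{id}$. It is left augmented if there are maps $f_{i,-1}:B_{i+1,-1}\to B_{i,0}$ ($i\ge0$) with $f_{i,-1}\circ u=d_1\circ f_{i,0}$ as maps $B_{i+1,0}\to B_{i,0}$, and $u\circ f_{i,-1}=e_{\top}$ as maps $B_{i+1,-1}\to B_{i,-1}$. *)

From Stdlib Require Import PeanoNat.

Set Implicit Arguments.
Unset Strict Implicit.

Record Grpd := {
  gob :> Type;
  ghom : gob -> gob -> Type;
  gid : forall x, ghom x x;
  gcomp : forall x y z, ghom y z -> ghom x y -> ghom x z;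
  ginv : forall x y, ghom x y -> ghom y x;
  gcomp_assoc : forall x y z w (h : ghom z w) (g : ghom y z) (f : ghom x y),
      gcomp h (gcomp g f) = gcomp (gcomp h g) f;
  gcomp_id_l : forall x y (f : ghom x y), gcomp (gid y) f = f;
  gcomp_id_r : forall x y (f : ghom x y), gcomp f (gid x) = f;
  ginv_l : forall x y (f : ghom x y), gcomp (ginv f) f = gid x;
  ginv_r : forall x y (f : ghom x y), gcomp f (ginv f) = gid y
}.
Arguments ghom {g0} _ _.
Arguments gid {g0} _.
Arguments gcomp {g0 x y z} _ _.
Arguments ginv {g0 x y} _.

Record Functor (G H : Grpd) := {
  fob :> G -> H;
  fmap : forall x y : G, ghom x y -> ghom (fob x) (fob y);
  fmap_id : forall x : G, fmap (gid x) = gid (fob x);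
  fmap_comp : forall (x y z : G) (g : ghom y z) (f : ghom x y),
      fmap (gcomp g f) = gcomp (fmap g) (fmap f)
}.
Arguments fmap {G H} f0 {x y} _.

Definition fcomp (G H K : Grpd) (F : Functor H K) (E : Functor G H) : Functor G K.
Proof.
  refine {| fob := fun x => F (E x);
            fmap := fun x y h => fmap F (fmap E h) |}.
  - intros x. rewrite fmap_id. apply fmap_id.
  - intros x y z g h. rewrite fmap_comp. apply fmap_comp.
Defined.

Definition fid (G : Grpd) : Functor G G.
Proof.
  refine {| fob := fun x => x; fmap := fun x y h => h |}; reflexivity.
Defined.

Definition feq (G H : Grpd) (F F' : Functor G H) : Prop :=
  forall (x y : G) (h : ghom x y),
    existT (fun p : H * H => ghom (fst p) (snd p)) (F x, F y) (fmap F h)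
    = existT (fun p : H * H => ghom (fst p) (snd p)) (F' x, F' y) (fmap F' h).

(** * Simplicial groupoids: the simplicial identities.
    [d n k : X (n+1) -> X n] is the k-th face map (0 <= k <= n+1),
    [s n k : X n -> X (n+1)] the k-th degeneracy (0 <= k <= n). *)
Definition simplicial_ids (X : nat -> Grpd)
  (d : forall n, nat -> Functor (X (S n)) (X n))
  (s : forall n, nat -> Functor (X n) (X (S n))) : Prop :=
  (forall n i j, i < j -> j <= n + 2 ->
     feq (fcomp (d n i) (d (S n) j)) (fcomp (d n (j - 1)) (d (S n) i)))
  /\ (forall n i j, i <= j -> j <= n ->
     feq (fcomp (s (S n) i) (s n j)) (fcomp (s (S n) (S j)) (s n i)))
  /\ (forall n i j, i < j -> j <= n + 1 ->
     feq (fcomp (d (S n) i) (s (S n) j)) (fcomp (s n (j - 1)) (d n i)))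
  /\ (forall n j, j <= n ->
     feq (fcomp (d n j) (s n j)) (fid (X n))
     /\ feq (fcomp (d n (S j)) (s n j)) (fid (X n)))
  /\ (forall n i j, S j < i -> i <= n + 2 ->
     feq (fcomp (d (S n) i) (s (S n) j)) (fcomp (s n j) (d n (i - 1)))).

Arguments simplicial_ids : clear implicits.

Definition simplicial_map (X : nat -> Grpd)
  (dX : forall n, nat -> Functor (X (S n)) (X n))
  (sX : forall n, nat -> Functor (X n) (X (S n)))
  (Y : nat -> Grpd)
  (dY : forall n, nat -> Functor (Y (S n)) (Y n))
  (sY : forall n, nat -> Functor (Y n) (Y (S n)))
  (phi : forall n, Functor (X n) (Y n)) : Prop :=
  (forall n k, k <= n + 1 ->
     feq (fcomp (phi n) (dX n k)) (fcomp (dY n k) (phi (S n))))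
  /\ (forall n k, k <= n ->
     feq (fcomp (phi (S n)) (sX n k)) (fcomp (sY n k) (phi n))).

Arguments simplicial_map : clear implicits.

(** * Augmented bisimplicial groupoids
    [B i j] = B_{i,j} (i,j >= 0), [A i] = B_{i,-1}, [C j] = B_{-1,j}. *)
Record AugBisimpGrpd := {
  B : nat -> nat -> Grpd;
  A : nat -> Grpd;
  C : nat -> Grpd;
  d : forall i j, nat -> Functor (B i (S j)) (B i j);
  s : forall i j, nat -> Functor (B i j) (B i (S j));
  e : forall i j, nat -> Functor (B (S i) j) (B i j);
  t : forall i j, nat -> Functor (B i j) (B (S i) j);
  eA : forall i, nat -> Functor (A (S i)) (A i);
  tA : forall i, nat -> Functor (A i) (A (S i));
  dC : forall j, nat -> Functor (C (S j)) (C j);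
  sC : forall j, nat -> Functor (C j) (C (S j));
  u : forall i, Functor (B i 0) (A i);
  v : forall j, Functor (B 0 j) (C j);
  row_simp : forall i, simplicial_ids (B i) (d i) (s i);
  col_simp : forall j, simplicial_ids (fun i => B i j) (fun i => e i j) (fun i => t i j);
  A_simp : simplicial_ids A eA tA;
  C_simp : simplicial_ids C dC sC;
  u_aug : forall i, feq (fcomp (u i) (d i 0 0)) (fcomp (u i) (d i 0 1));
  v_aug : forall j, feq (fcomp (v j) (e 0 j 0)) (fcomp (v j) (e 0 j 1));
  e_hor : forall i k, k <= i + 1 ->
    simplicial_map (B (S i)) (d (S i)) (s (S i)) (B i) (d i) (s i) (fun j => e i j k);
  t_hor : forall i k, k <= i ->
    simplicial_map (B i) (d i) (s i) (B (S i)) (d (S i)) (s (S i)) (fun j => t i j k);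
  u_simp : simplicial_map (fun i => B i 0) (fun i => e i 0) (fun i => t i 0) A eA tA u;
  v_simp : simplicial_map (B 0) (d 0) (s 0) C dC sC v
}.

Record Abacus (X : AugBisimpGrpd) := {
  f : forall i j, Functor (B X (S i) j) (B X i (S j));
  (* f_{i,.} : B_{i+1,.} -> Dec_bot(B_{i,.}) is simplicial *)
  ab_row_d : forall i j k, k <= S j ->
    feq (fcomp (d X i (S j) (S k)) (f i (S j))) (fcomp (f i j) (d X (S i) j k));
  ab_row_s : forall i j k, k <= j ->
    feq (fcomp (s X i (S j) (S k)) (f i j)) (fcomp (f i (S j)) (s X (S i) j k));
  (* f_{.,j} : Dec_top(B_{.,j}) -> B_{.,j+1} commutes with all structure maps
     except top face maps *)
  ab_col_e : forall i j k, k <= i ->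
    feq (fcomp (e X i (S j) k) (f (S i) j)) (fcomp (f i j) (e X (S i) j k));
  ab_col_t : forall i j k, k <= i ->
    feq (fcomp (t X i (S j) k) (f i j)) (fcomp (f (S i) j) (t X (S i) j k));
  ab_unit : forall i j,
    feq (fcomp (d X i j 0) (fcomp (f i j) (t X i j i))) (fid (B X i j))
}.

(** Left augmentation of an abacus map: [fm1 i = f_{i,-1} : B_{i+1,-1} -> B_{i,0}]. *)
Record LeftAugmentation (X : AugBisimpGrpd) (F : Abacus X) := {
  fm1 : forall i, Functor (A X (S i)) (B X i 0);
  la_1 : forall i, feq (fcomp (fm1 i) (u X (S i))) (fcomp (d X i 0 1) (f F i 0));
  la_2 : forall i, feq (fcomp (u X i) (fm1 i)) (eA X i (S i))
}.

Definition etilde (X : AugBisimpGrpd) (F : Abacus X) (i j k : nat)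
  : Functor (B X (S i) j) (B X i j) :=
  if Nat.eqb k (S i) then fcomp (d X i j 0) (f F i j) else e X i j k.

(* Only the top face map changes, so only it needs checking, and for it
   u d_0 f_{n,0} = u d_1 f_{n,0} = u f_{n,-1} u = e_{n+1} u
   by the augmentation identity and the two axioms of a left augmentation. *)
From Stdlib Require Import PeanoNat Setoid Morphisms.

Set Implicit Arguments.

Section FunctorEquality.

Variables G H : Grpd.

Lemma feq_refl (F : Functor G H) : feq F F.
Proof. intros x y h. reflexivity. Qed.

Lemma feq_sym (F1 F2 : Functor G H) : feq F1 F2 -> feq F2 F1.
Proof. intros E x y h. symmetry. apply E. Qed.

Lemma feq_trans (F1 F2 F3 : Functor G H) : feq F1 F2 -> feq F2 F3 -> feq F1 F3.
Proof. intros E1 E2 x y h. rewrite (E1 x y h). apply E2. Qed.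

End FunctorEquality.

Add Parametric Relation (G H : Grpd) : (Functor G H) (@feq G H)
  reflexivity proved by (@feq_refl G H)
  symmetry proved by (@feq_sym G H)
  transitivity proved by (@feq_trans G H)
  as feq_rel.

Lemma feq_fcompl (G H K : Grpd) (E : Functor H K) (F1 F2 : Functor G H) :
  feq F1 F2 -> feq (fcomp E F1) (fcomp E F2).
Proof.
  intros EF x y h.
  exact (f_equal (fun q => existT (fun p : K * K => ghom (fst p) (snd p))
                    (E (fst (projT1 q)), E (snd (projT1 q))) (fmap E (projT2 q)))
                 (EF x y h)).
Qed.

Lemma feq_fcompr (G H K : Grpd) (E1 E2 : Functor H K) (F : Functor G H) :
  feq E1 E2 -> feq (fcomp E1 F) (fcomp E2 F).
Proof. intros EE x y h. exact (EE _ _ (fmap F h)). Qed.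

Add Parametric Morphism (G H K : Grpd) : (@fcomp G H K)
  with signature (@feq H K) ==> (@feq G H) ==> (@feq G K)
  as fcomp_feq_morphism.
Proof.
  intros E1 E2 EE F1 F2 EF.
  transitivity (fcomp E2 F1); [apply feq_fcompr | apply feq_fcompl]; assumption.
Qed.

Lemma fcompA (G H K M : Grpd) (a : Functor K M) (b : Functor H K) (c : Functor G H) :
  feq (fcomp a (fcomp b c)) (fcomp (fcomp a b) c).
Proof. intros x y h. reflexivity. Qed.

Section TopFace.

Variables (X : AugBisimpGrpd) (F : Abacus X) (L : LeftAugmentation F).

Lemma etilde_top (i j : nat) : etilde F i j (S i) = fcomp (d X i j 0) (f F i j).
Proof. unfold etilde. now rewrite Nat.eqb_refl. Qed.

Lemma etilde_lower (i j k : nat) : k <> S i -> etilde F i j k = e X i j k.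
Proof. intros Hk. unfold etilde. now rewrite (proj2 (Nat.eqb_neq k (S i)) Hk). Qed.

Lemma u_etilde_top (n : nat) :
  feq (fcomp (u X n) (etilde F n 0 (S n))) (fcomp (eA X n (S n)) (u X (S n))).
Proof.
  rewrite etilde_top, fcompA, (@u_aug X n), <- fcompA, <- (@la_1 X F L n), fcompA.
  now rewrite (@la_2 X F L n).
Qed.

End TopFace.

Theorem lemma2p3 (X : AugBisimpGrpd) (F : Abacus X) (L : LeftAugmentation F) :
  simplicial_map (fun i => B X i 0) (fun i => etilde F i 0) (fun i => t X i 0)
                 (A X) (eA X) (tA X) (u X).
Proof.
  destruct (u_simp X) as [u_faces u_degeneracies].
  split; [| exact u_degeneracies].
  intros n k Hk.
  destruct (Nat.eq_dec k (S n)) as [-> | Hlower].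
  - exact (u_etilde_top L n).
  - rewrite etilde_lower by exact Hlower.
    exact (u_faces n k Hk).
Qed.
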